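(* Let $A$ be an AUF algebra and let $M$ be a coherent left $A$-module that is projective. Then $M$ is a projective generator of $\mathrm{Coh}_{\mathrm L}(A)$ if and only if every irreducible coherent left $A$-module is an epimorphic image of $M$.
   Context: All algebras are associative $\mathbb C$-algebras, not necessarily unital. An idempotent is $e$ with $e^2=e$. An algebra $A$ is AUF if there is a family $(e_i)_{i\in\mathfrak I}$ of mutually orthogonal idempotents with $\dim e_iAe_j<\infty$ and $A=\sum_{i,j}e_iAe_j$. A left $A$-module $M$ is quasicoherent if $\xi\in A\xi$ for all $\xi\in M$, coherent if moreover finitely generated; $\mathrm{Coh}_{\mathrm L}(A)$ is the category of coherent left $A$-modules. Irreducible means nonzero with no nonzero proper submodules (in the category of all left $A$-modules). A projective generator of $\mathrm{Coh}_{\mathrm L}(A)$ is a projective coherent module $M$ such that every coherent left $A$-module is a quotient of $M^{\oplus n}$ for some $n\ge1$. *)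

(* Non-unital associative C-algebras and their left modules,
   set up from scratch (MathComp's ring structures are unital). *)
From HB Require Import structures.
From mathcomp Require Import all_boot all_algebra.
From mathcomp Require Import complex Rstruct.

Set Implicit Arguments.
Unset Strict Implicit.
Unset Printing Implicit Defensive.

Import GRing.Theory.
Local Open Scope ring_scope.

Definition C : fieldType := (Rdefinitions.R)[i].

Record nualg := NuAlg {
  acarrier :> lmodType C;
  amul : acarrier -> acarrier -> acarrier;
  amulDl : forall a b c, amul (a + b) c = amul a c + amul b c;
  amulDr : forall a b c, amul a (b + c) = amul a b + amul a c;
  amulZl : forall (k : C) a b, amul (k *: a) b = k *: amul a b;
  amulZr : forall (k : C) a b, amul a (k *: b) = k *: amul a b;
  amulA  : forall a b c, amul a (amul b c) = amul (amul a b) c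
}.

(* A subset P of a C-vector space V is finite dimensional (P is meant to be
   a subspace): it is spanned by a finite family of vectors. *)
Definition fin_dim_subspace (V : lmodType C) (P : V -> Prop) : Prop :=
  exists vs : seq V, forall x, P x ->
    exists c : 'I_(size vs) -> C, x = \sum_(k < size vs) c k *: vs`_k.

Definition AUF (A : nualg) : Prop :=
  exists (I : Type) (e : I -> A),
    (forall i, amul (e i) (e i) = e i) /\
    (forall i j, i <> j -> amul (e i) (e j) = 0) /\
    (forall i j, fin_dim_subspace (fun y : A =>
        exists x : A, y = amul (amul (e i) x) (e j))) /\
    (forall a : A, exists s : seq ((I * I) * A),
        a = \sum_(t <- s) amul (amul (e t.1.1) t.2) (e t.1.2)).

Record lmodule (A : nualg) := LModule {
  mcarrier :> lmodType C;
  act : A -> mcarrier -> mcarrier;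
  actDl : forall a b m, act (a + b) m = act a m + act b m;
  actDr : forall a m n, act a (m + n) = act a m + act a n;
  actZl : forall (k : C) a m, act (k *: a) m = k *: act a m;
  actZr : forall (k : C) a m, act a (k *: m) = k *: act a m;
  actA  : forall a b m, act (amul a b) m = act a (act b m)
}.

Section Modules.
Variable A : nualg.

Definition is_hom (M N : lmodule A) (f : M -> N) : Prop :=
  (forall x y, f (x + y) = f x + f y) /\
  (forall (k : C) x, f (k *: x) = k *: f x) /\
  (forall (a : A) x, f (act a x) = act a (f x)).

Definition surj (M N : Type) (f : M -> N) : Prop := forall y, exists x, f x = y.

Definition is_submodule (M : lmodule A) (P : M -> Prop) : Prop :=
  P 0 /\ (forall x y, P x -> P y -> P (x + y)) /\
  (forall (k : C) x, P x -> P (k *: x)) /\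
  (forall (a : A) x, P x -> P (act a x)).

Definition quasicoherent (M : lmodule A) : Prop :=
  forall xi : M, exists a : A, act a xi = xi.

Definition fin_generated (M : lmodule A) : Prop :=
  exists gens : seq M, forall P : M -> Prop, is_submodule P ->
    (forall i : 'I_(size gens), P gens`_i) -> forall x, P x.

Definition coherent (M : lmodule A) : Prop :=
  quasicoherent M /\ fin_generated M.

(* Irreducible (in the category of all left A-modules). *)
Definition irreducible (M : lmodule A) : Prop :=
  (exists x : M, x <> 0) /\
  forall P : M -> Prop, is_submodule P ->
    (forall x, P x -> x = 0) \/ (forall x, P x).

(* Projective object of Coh_L(A); epimorphisms in Coh_L(A) are the surjective
   homomorphisms. *)
Definition projective_coh (M : lmodule A) : Prop :=
  forall (N P : lmodule A), coherent N -> coherent P ->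
  forall g : N -> P, is_hom g -> surj g ->
  forall f : M -> P, is_hom f ->
  exists h : M -> N, is_hom h /\ forall x, g (h x) = f x.

Section DirectSum.
Variables (M : lmodule A) (n : nat).
Definition dsum_type : lmodType C := {ffun 'I_n -> M}.
Definition dsum_act (a : A) (x : dsum_type) : dsum_type :=
  [ffun i => act a (x i)].

Lemma dsum_actDl a b m : dsum_act (a + b) m = dsum_act a m + dsum_act b m.
Proof. by apply/ffunP => i; rewrite !ffunE actDl. Qed.
Lemma dsum_actDr a m m' : dsum_act a (m + m') = dsum_act a m + dsum_act a m'.
Proof. by apply/ffunP => i; rewrite !ffunE actDr. Qed.
Lemma dsum_actZl (k : C) a m : dsum_act (k *: a) m = k *: dsum_act a m.
Proof. by apply/ffunP => i; rewrite !ffunE actZl. Qed.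
Lemma dsum_actZr (k : C) a m : dsum_act a (k *: m) = k *: dsum_act a m.
Proof. by apply/ffunP => i; rewrite !ffunE actZr. Qed.
Lemma dsum_actA a b m : dsum_act (amul a b) m = dsum_act a (dsum_act b m).
Proof. by apply/ffunP => i; rewrite !ffunE actA. Qed.

Definition dsum : lmodule A :=
  @LModule A dsum_type dsum_act dsum_actDl dsum_actDr dsum_actZl dsum_actZr
    dsum_actA.
End DirectSum.

Definition projective_generator (M : lmodule A) : Prop :=
  coherent M /\ projective_coh M /\
  forall N : lmodule A, coherent N ->
    exists n : nat, (1 <= n)%N /\
      exists f : dsum M n -> N, is_hom f /\ surj f.

End Modules.

(* Forward: if M^n maps onto an irreducible N, some summand M already has a nonzero, hence
   surjective, image.  Backward: let T be the trace of M in a coherent N, the union of the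
   images of all homomorphisms M^n -> N.  If T <> N, Zorn's lemma (N is finitely generated)
   gives a maximal proper submodule K containing T.  Then N/K is coherent and irreducible, so
   some f : M -> N/K is onto; by projectivity f lifts to h : M -> N, whose image lies in
   T <= K, so f = 0, a contradiction.  Hence T = N, and the finitely many generators of N lie
   in the image of a single M^n -> N. *)

From HB Require Import structures.
From mathcomp Require Import all_boot all_algebra boolp classical_sets.

Set Implicit Arguments.
Unset Strict Implicit.
Unset Printing Implicit Defensive.

Import GRing.Theory.
Local Open Scope ring_scope.
Local Open Scope classical_set_scope.
Local Open Scope quotient_scope.

Section ModuleFacts.
Variable A : nualg.
Implicit Types M N : lmodule A.

Lemma act0 N a : act a (0 : N) = 0.
Proof. by apply/(@addrI _ (act a (0 : N))); rewrite -actDr !addr0. Qed.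

Lemma actN N a (x : N) : act a (- x) = - act a x.
Proof. by rewrite -scaleN1r actZr scaleN1r. Qed.

Section Homomorphisms.
Variables (M N : lmodule A) (f : M -> N).
Hypothesis f_hom : is_hom f.

Lemma homD : {morph f : x y / x + y}.
Proof. by case: f_hom. Qed.

Lemma homZ k : {morph f : x / k *: x}.
Proof. by move=> x; case: f_hom => _ [->]. Qed.

Lemma homA a : {morph f : x / act a x}.
Proof. by move=> x; case: f_hom => _ [_ ->]. Qed.

Lemma hom0 : f 0 = 0.
Proof. by apply/(@addrI _ (f 0)); rewrite -homD !addr0. Qed.

Lemma hom_sum (I : Type) (r : seq I) (F : I -> M) :
  f (\sum_(i <- r) F i) = \sum_(i <- r) f (F i).
Proof. exact: (big_morph f homD hom0). Qed.

End Homomorphisms.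

Lemma hom_comp (L M N : lmodule A) (f : L -> M) (g : M -> N) :
  is_hom f -> is_hom g -> is_hom (g \o f).
Proof.
move=> fh gh; (split; [|split]) => [x y|k x|a x] /=.
- by rewrite (homD fh) (homD gh).
- by rewrite (homZ fh) (homZ gh).
- by rewrite (homA fh) (homA gh).
Qed.

Lemma hom_add M N (f g : M -> N) :
  is_hom f -> is_hom g -> is_hom (fun x => f x + g x).
Proof.
move=> fh gh; (split; [|split]) => [x y|k x|a x].
- by rewrite (homD fh) (homD gh) addrACA.
- by rewrite (homZ fh) (homZ gh) scalerDr.
- by rewrite (homA fh) (homA gh) actDr.
Qed.

Lemma zero_hom M N : is_hom (fun _ : M => 0 : N).
Proof. by (split; [|split]) => *; rewrite ?addr0 ?scaler0 ?act0. Qed.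

Section Submodules.
Variables (N : lmodule A) (P : set N).
Hypothesis P_sub : is_submodule P.

Lemma submod0 : P 0.
Proof. by case: P_sub. Qed.

Lemma submodD x y : P x -> P y -> P (x + y).
Proof. by case: P_sub => _ [PD _]; apply: PD. Qed.

Lemma submodZ k x : P x -> P (k *: x).
Proof. by case: P_sub => _ [_ [PZ _]]; apply: PZ. Qed.

Lemma submodA a x : P x -> P (act a x).
Proof. by case: P_sub => _ [_ [_ PA]]; apply: PA. Qed.

Lemma submodN x : P x -> P (- x).
Proof. by rewrite -scaleN1r; apply: submodZ. Qed.

End Submodules.

Lemma range_submodule M N (f : M -> N) : is_hom f -> is_submodule (range f).
Proof.
move=> fh; split; first by exists 0; last exact: hom0 fh.
split; first by move=> _ _ [x _ <-] [y _ <-]; exists (x + y); last exact: homD.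
split; first by move=> k _ [x _ <-]; exists (k *: x); last exact: homZ.
by move=> a _ [x _ <-]; exists (act a x); last exact: homA.
Qed.

Lemma preimage_submodule M N (f : M -> N) (P : set N) :
  is_hom f -> is_submodule P -> is_submodule (f @^-1` P).
Proof.
move=> fh Psub; split; first by rewrite /= (hom0 fh); apply: submod0 Psub.
split; first by move=> x y Px Py; rewrite /= (homD fh); apply: (submodD Psub).
split; first by move=> k x Px; rewrite /= (homZ fh); apply: (submodZ Psub).
by move=> a x Px; rewrite /= (homA fh); apply: (submodA Psub).
Qed.

Definition generates N (gens : seq N) : Prop :=
  forall P : set N, is_submodule P -> {in gens, forall x, P x} -> forall x, P x.

Lemma fin_generatedP N : fin_generated N <-> exists gens : seq N, generates gens.
Proof.
split=> -[gens gen]; exists gens => P Psub Pgens.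
  by apply: gen => // i; apply/Pgens/mem_nth.
by apply: gen => // x /(nthP 0) [i ilt <-]; apply: (Pgens (Ordinal ilt)).
Qed.

Lemma coherent_surj M N (p : M -> N) : is_hom p -> surj p -> coherent M -> coherent N.
Proof.
move=> ph psurj [Mqc /fin_generatedP [gens gen]]; split.
  move=> y; have [x <-] := psurj y; have [a ax] := Mqc x.
  by exists a; rewrite -(homA ph) ax.
apply/fin_generatedP; exists (map p gens) => P Psub Pgens y.
have [x <-] := psurj y; apply: (gen (p @^-1` P)) => [|z zgens].
  exact: preimage_submodule.
by apply: Pgens; rewrite map_f.
Qed.

End ModuleFacts.

Section Quotient.
Variables (A : nualg) (N : lmodule A) (K : set N).
Hypothesis K_sub : is_submodule K.

Definition submod_rel (x y : N) : bool := `[< K (x - y) >].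

Lemma submod_rel_equiv : equiv_class_of submod_rel.
Proof.
split=> [x|x y|y x z]; rewrite /submod_rel.
- by rewrite subrr; apply/asboolP; apply: submod0 K_sub.
- by apply/asboolP/asboolP => /(submodN K_sub); rewrite opprB.
- move=> /asboolP Kxy /asboolP Kyz; apply/asboolP.
  by rewrite -(subrKA y); apply: (submodD K_sub).
Qed.

Definition quot := {eq_quot EquivRelPack submod_rel_equiv}.
HB.instance Definition _ := Choice.on quot.
HB.instance Definition _ := Quotient.on quot.

Lemma quot_eqP x y : \pi_quot x = \pi_quot y <-> K (x - y).
Proof. by split=> [/eqquotP/asboolP|Kxy]; [|apply/eqquotP/asboolP]. Qed.

Lemma quot_repr x : K (x - repr (\pi_quot x)).
Proof. by apply/quot_eqP; rewrite reprK. Qed.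

Definition qadd := lift_op2 quot +%R.
Definition qopp := lift_op1 quot -%R.
Definition qscale (k : C) := lift_op1 quot ( *:%R k).
Definition qact (a : A) := lift_op1 quot (act a).

Lemma pi_qadd : {morph \pi_quot : x y / x + y >-> qadd x y}.
Proof.
move=> x y; unlock qadd; apply/quot_eqP; rewrite opprD addrACA.
by apply: (submodD K_sub); apply: quot_repr.
Qed.

Lemma pi_qopp : {morph \pi_quot : x / - x >-> qopp x}.
Proof.
by move=> x; unlock qopp; apply/quot_eqP; rewrite -opprD; apply/(submodN K_sub)/quot_repr.
Qed.

Lemma pi_qscale k : {morph \pi_quot : x / k *: x >-> qscale k x}.
Proof.
move=> x; unlock qscale; apply/quot_eqP; rewrite -scalerBr.
exact/(submodZ K_sub)/quot_repr.
Qed.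

Lemma pi_qact a : {morph \pi_quot : x / act a x >-> qact a x}.
Proof.
move=> x; unlock qact; apply/quot_eqP; rewrite -actN -actDr.
exact/(submodA K_sub)/quot_repr.
Qed.

Canonical pi_qadd_morph := PiMorph2 pi_qadd.
Canonical pi_qopp_morph := PiMorph1 pi_qopp.
Canonical pi_qscale_morph k := PiMorph1 (pi_qscale k).
Canonical pi_qact_morph a := PiMorph1 (pi_qact a).

Lemma qaddA : associative qadd.
Proof. by do 3!elim/quotW=> ?; rewrite !piE addrA. Qed.

Lemma qaddC : commutative qadd.
Proof. by do 2!elim/quotW=> ?; rewrite !piE addrC. Qed.

Lemma qadd0 : left_id (\pi_quot 0) qadd.
Proof. by elim/quotW=> ?; rewrite !piE add0r. Qed.

Lemma qaddN : left_inverse (\pi_quot 0) qopp qadd.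
Proof. by elim/quotW=> ?; rewrite !piE addNr. Qed.

HB.instance Definition _ := GRing.isZmodule.Build quot qaddA qaddC qadd0 qaddN.

Lemma qscaleA k l : forall p, qscale k (qscale l p) = qscale (k * l) p.
Proof. by elim/quotW=> ?; rewrite !piE scalerA. Qed.

Lemma qscale1 : left_id 1 qscale.
Proof. by elim/quotW=> ?; rewrite !piE scale1r. Qed.

Lemma qscaleDr : right_distributive qscale +%R.
Proof. by move=> k; do 2!elim/quotW=> ?; rewrite !piE scalerDr. Qed.

Lemma qscaleDl p : {morph qscale^~ p : k l / k + l}.
Proof. by move=> k l; elim/quotW: p => ?; rewrite !piE scalerDl. Qed.

HB.instance Definition _ :=
  GRing.Zmodule_isLmodule.Build C quot qscaleA qscale1 qscaleDr qscaleDl.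

Lemma quot_piD x y : \pi_quot (x + y) = \pi_quot x + \pi_quot y.
Proof. exact: pi_qadd. Qed.

Lemma quot_piZ k x : \pi_quot (k *: x) = k *: \pi_quot x.
Proof. exact: pi_qscale. Qed.

Lemma qactDl a b p : qact (a + b) p = qact a p + qact b p.
Proof. by elim/quotW: p => x; rewrite -!pi_qact actDl quot_piD. Qed.

Lemma qactDr a p q : qact a (p + q) = qact a p + qact a q.
Proof.
by elim/quotW: p => x; elim/quotW: q => y; rewrite -quot_piD -!pi_qact actDr quot_piD.
Qed.

Lemma qactZl k a p : qact (k *: a) p = k *: qact a p.
Proof. by elim/quotW: p => x; rewrite -!pi_qact actZl quot_piZ. Qed.

Lemma qactZr k a p : qact a (k *: p) = k *: qact a p.
Proof. by elim/quotW: p => x; rewrite -quot_piZ -!pi_qact actZr quot_piZ. Qed.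

Lemma qactA a b p : qact (amul a b) p = qact a (qact b p).
Proof. by elim/quotW: p => x; rewrite -!pi_qact actA. Qed.

Definition quot_mod : lmodule A := LModule qactDl qactDr qactZl qactZr qactA.

Definition quot_pi : N -> quot_mod := \pi_quot.

Lemma quot_pi_hom : is_hom quot_pi.
Proof. by (split; [|split]) => *; rewrite /quot_pi ?quot_piD ?quot_piZ ?pi_qact. Qed.

Lemma quot_pi_surj : surj quot_pi.
Proof. by move=> q; exists (repr q); apply: reprK. Qed.

Lemma quot_pi_eq0 x : quot_pi x = 0 <-> K x.
Proof. by rewrite -[0]/(\pi_quot 0) quot_eqP subr0. Qed.

End Quotient.

Arguments quot_pi_surj [A N K] K_sub.

Section DirectSum.
Variables (A : nualg) (M : lmodule A).

Definition dsum_delta n (i : 'I_n) (m : M) : dsum M n :=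
  [ffun j => if j == i then m else 0].

Definition dsum_reindex n k (sigma : 'I_n -> 'I_k) (w : dsum M k) : dsum M n :=
  [ffun i => w (sigma i)].

Lemma dsum_delta_hom n (i : 'I_n) : is_hom (dsum_delta i).
Proof.
(split; [|split]) => [x y|k x|a x]; apply/ffunP => j; rewrite !ffunE /=;
  by case: eqP; rewrite ?addr0 ?scaler0 ?act0.
Qed.

Lemma dsum_reindex_hom n k (sigma : 'I_n -> 'I_k) : is_hom (dsum_reindex sigma).
Proof. by (split; [|split]) => *; apply/ffunP => i; rewrite !ffunE. Qed.

Lemma dsum_eval_hom n (i : 'I_n) : is_hom (fun w : dsum M n => w i).
Proof. by (split; [|split]) => *; rewrite ffunE. Qed.

Lemma dsum_sum_delta n (w : dsum M n) : w = \sum_i dsum_delta i (w i).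
Proof.
apply/ffunP => j; rewrite sum_ffunE (bigD1 j) //= big1 => [|i /negPf ij].
  by rewrite ffunE eqxx addr0.
by rewrite ffunE eq_sym ij.
Qed.

Lemma dsum_surj_irreducible (N : lmodule A) n (f : dsum M n -> N) :
  is_hom f -> surj f -> irreducible N -> exists i, surj (f \o dsum_delta i).
Proof.
move=> fh fsurj [[y y_neq0] N_irr]; apply: contrapT => no_surj; apply: y_neq0.
have [w <-] := fsurj y; rewrite (dsum_sum_delta w) (hom_sum fh) big1 // => i _.
have fi_hom := hom_comp (dsum_delta_hom i) fh.
have [range0|range_full] := N_irr _ (range_submodule fi_hom).
  by apply: range0; exists (w i).
by case: no_surj; exists i => z; have [m _ <-] := range_full z; exists m.
Qed.

Definition dsum_join n m (u : dsum M n) (v : dsum M m) : dsum M (n + m) :=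
  [ffun k => match split k with inl i => u i | inr j => v j end].

Lemma dsum_join_lshift n m (u : dsum M n) (v : dsum M m) :
  dsum_reindex (@lshift n m) (dsum_join u v) = u.
Proof. by apply/ffunP => i; rewrite !ffunE -[lshift m i]/(unsplit (inl i)) unsplitK. Qed.

Lemma dsum_join_rshift n m (u : dsum M n) (v : dsum M m) :
  dsum_reindex (@rshift n m) (dsum_join u v) = v.
Proof. by apply/ffunP => j; rewrite !ffunE -[rshift n j]/(unsplit (inr j)) unsplitK. Qed.

Lemma dsum_merge (N : lmodule A) n m (f : dsum M n -> N) (g : dsum M m -> N) :
  is_hom f -> is_hom g -> exists2 h : dsum M (n + m) -> N,
    is_hom h & range f `<=` range h /\ range g `<=` range h.
Proof.
move=> fh gh.
exists (fun w => f (dsum_reindex (@lshift n m) w) + g (dsum_reindex (@rshift n m) w)).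
  by apply: hom_add; apply: hom_comp => //; apply: dsum_reindex_hom.
split=> _ [u _ <-]; [exists (dsum_join u 0) | exists (dsum_join 0 u)] => //;
  by rewrite dsum_join_lshift dsum_join_rshift ?(hom0 fh) ?(hom0 gh) ?addr0 ?add0r.
Qed.

End DirectSum.

Section Trace.
Variables (A : nualg) (M N : lmodule A).

Definition trace : set N :=
  fun y => exists n (f : dsum M n -> N), is_hom f /\ range f y.

Lemma trace_submodule : is_submodule trace.
Proof.
split; first by exists 0%N, (fun _ => 0); split; [exact: zero_hom | exists 0].
split.
  move=> x y [n [f [fh fx]]] [m [g [gh gy]]].
  have [h hh [f_sub g_sub]] := dsum_merge fh gh.
  exists (n + m)%N, h; split => //.
  by apply: (submodD (range_submodule hh)); [apply: f_sub | apply: g_sub].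
split.
  move=> k y [n [f [fh fy]]]; exists n, f; split => //.
  exact: (submodZ (range_submodule fh)).
move=> a y [n [f [fh fy]]]; exists n, f; split => //.
exact: (submodA (range_submodule fh)).
Qed.

Lemma hom_range_trace (h : M -> N) : is_hom h -> range h `<=` trace.
Proof.
move=> hh _ [m _ <-]; exists 1%N, (fun w : dsum M 1 => h (w ord0)); split.
  exact: hom_comp (dsum_eval_hom M ord0) hh.
by exists [ffun=> m]; rewrite ?ffunE.
Qed.

Lemma trace_cover (s : seq N) : {in s, forall x, trace x} ->
  exists n, (1 <= n)%N /\
    exists2 f : dsum M n -> N, is_hom f & {in s, forall x, range f x}.
Proof.
elim: s => [|y s IH] s_trace.
  by exists 1%N; split => //; exists (fun _ => 0) => //; exact: zero_hom.
have [k [g [gh gy]]] := s_trace y (mem_head y s).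
have [|n [n_gt0 [f fh f_s]]] := IH.
  by move=> x xs; apply: s_trace; rewrite inE xs orbT.
have [h hh [g_sub f_sub]] := dsum_merge gh fh.
exists (k + n)%N; split; first by rewrite addn_gt0 n_gt0 orbT.
by exists h => // x; rewrite inE => /predU1P [-> | /f_s]; [apply: g_sub | apply: f_sub].
Qed.

Lemma trace_full_surj (gens : seq N) : generates gens -> (forall x, trace x) ->
  exists n, (1 <= n)%N /\ exists f : dsum M n -> N, is_hom f /\ surj f.
Proof.
move=> gen full; have [n [n_gt0 [f fh f_gens]]] := @trace_cover gens (fun x _ => full x).
exists n; split => //; exists f; split => // y.
by have [x _ <-] := gen _ (range_submodule fh) f_gens y; exists x.
Qed.

End Trace.

Arguments trace [A] M N.

Lemma chain_bigcup_seq (T : eqType) (F : set (set T)) (X0 : set T) (s : seq T) :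
  F X0 -> total_on F subset -> {in s, forall x, (\bigcup_(X in F) X) x} ->
  exists2 X, F X & {in s, forall x, X x}.
Proof.
move=> FX0 Ftot; elim: s => [|y s IH] s_cup; first by exists X0.
have [Y FY Yy] := s_cup y (mem_head y s).
have [|X FX Xs] := IH; first by move=> x xs; apply: s_cup; rewrite inE xs orbT.
have [YX|XY] := Ftot _ _ FY FX.
  by exists X => // x; rewrite inE => /predU1P [-> | /Xs]; [apply: YX|].
by exists Y => // x; rewrite inE => /predU1P [-> | /Xs /XY].
Qed.

Section MaximalSubmodule.
Variables (A : nualg) (N : lmodule A).

Definition maximal_submodule (K : set N) : Prop :=
  [/\ is_submodule K, ~ (forall x, K x) &
    forall K', is_submodule K' -> K `<=` K' -> K' `<=` K \/ forall x, K' x].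

Variables (gens : seq N) (B : set N).
Hypothesis gens_gen : generates gens.

Definition proper_over (X : set N) : Prop :=
  [/\ is_submodule X, B `<=` X & ~ {in gens, forall x, X x}].

(* [Zorn_bigcup] also needs an upper bound for the empty chain, whose union is [set0]. *)
Lemma chain_proper_over (F : set (set N)) :
  F `<=` (fun X => X = set0 \/ proper_over X) -> total_on F subset ->
  \bigcup_(X in F) X = set0 \/ proper_over (\bigcup_(X in F) X).
Proof.
move=> FP Ftot; set U := \bigcup_(X in F) X.
have [[X0 FX0 [z X0z]] | F0] := pselect (exists2 X, F X & X !=set0); last first.
  by left; apply/seteqP; split => // x [X FX Xx]; apply: F0; exists X => //; exists x.
have proper_of X x : F X -> X x -> proper_over X.
  by move=> FX Xx; case: (FP X FX) => // X_0; rewrite X_0 in Xx.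
have [X0sub BX0 _] := proper_of _ _ FX0 X0z.
have in_member x : U x -> exists2 X, F X & proper_over X /\ X x.
  by move=> [X FX Xx]; exists X => //; split => //; apply: proper_of Xx.
right; split.
- split; first by exists X0 => //; apply: (submod0 X0sub).
  split.
    move=> x y Ux Uy.
    have [|X FX Xxy] := chain_bigcup_seq (s := [:: x; y]) FX0 Ftot.
      by move=> w; rewrite !inE => /orP [/eqP -> | /eqP ->].
    have [Xsub _ _] := proper_of X x FX (Xxy x (mem_head _ _)).
    by exists X => //; apply: (submodD Xsub); apply: Xxy; rewrite !inE eqxx ?orbT.
  split.
    by move=> k x /in_member [X FX [[Xsub _ _] Xx]]; exists X => //; apply: (submodZ Xsub).
  by move=> a x /in_member [X FX [[Xsub _ _] Xx]]; exists X => //; apply: (submodA Xsub).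
- by move=> x Bx; exists X0 => //; apply: BX0.
- move=> U_gens; have [|X FX Xs] := chain_bigcup_seq (s := z :: gens) FX0 Ftot.
    by move=> x; rewrite inE => /predU1P [-> | /U_gens]; [exists X0|].
  have [_ _] := proper_of X z FX (Xs z (mem_head _ _)).
  by apply=> x xgens; apply: Xs; rewrite inE xgens orbT.
Qed.

Lemma exists_maximal_submodule : is_submodule B -> ~ (forall x, B x) ->
  exists2 K, maximal_submodule K & B `<=` K.
Proof.
move=> Bsub B_proper.
have B_proper_over : proper_over B.
  by split => // B_gens; apply: B_proper; apply: gens_gen.
have [K [[K0|[Ksub BK K_gens]] Kmax]] := Zorn_bigcup chain_proper_over.
  by case: (Kmax B); [rewrite K0; split => // /(_ 0 (submod0 Bsub)) | right].
exists K => //; split => // [K_full|K' K'sub KK'].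
  by apply: K_gens => x _; apply: K_full.
have [K'K|K'_notK] := pselect (K' `<=` K); [by left | right].
apply: gens_gen => // x xgens; apply: contrapT => K'x_not.
apply: (Kmax K'); first by split.
right; split => // [y By|K'_gens]; first exact/KK'/BK.
by apply: K'x_not; apply: K'_gens.
Qed.

End MaximalSubmodule.

Lemma quot_irreducible (A : nualg) (N : lmodule A) (K : set N) (K_sub : is_submodule K) :
  maximal_submodule K -> irreducible (quot_mod K_sub).
Proof.
move=> [_ K_proper K_max]; split.
  have [x Kx_not] := (existsNP K).2 K_proper.
  by exists (quot_pi K_sub x) => /quot_pi_eq0.
move=> P P_sub.
have preP_sub := preimage_submodule (quot_pi_hom K_sub) P_sub.
have KP : K `<=` quot_pi K_sub @^-1` P.
  by move=> x /(quot_pi_eq0 K_sub) /= ->; apply: submod0 P_sub.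
have [PK|P_full] := K_max _ preP_sub KP; [left|right] => q;
  have [x <-] := quot_pi_surj K_sub q.
- by move=> /PK /quot_pi_eq0.
- exact: P_full.
Qed.

Lemma trace_full_of_irreducible_images (A : nualg) (M N : lmodule A) :
  projective_coh M ->
  (forall S : lmodule A, coherent S -> irreducible S ->
     exists f : M -> S, is_hom f /\ surj f) ->
  coherent N -> forall x, trace M N x.
Proof.
move=> M_proj M_onto N_coh; apply: contrapT => trace_proper.
have [gens gen] := (fin_generatedP N).1 N_coh.2.
have [K K_max traceK] :=
  exists_maximal_submodule gen (trace_submodule M N) trace_proper.
have [K_sub K_proper _] := K_max.
have pi_hom := quot_pi_hom K_sub; have pi_surj := quot_pi_surj K_sub.
have S_coh := coherent_surj pi_hom pi_surj N_coh.
have [f [fh f_surj]] := M_onto _ S_coh (quot_irreducible K_sub K_max).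
have [h [hh hf]] := M_proj _ _ N_coh S_coh _ pi_hom pi_surj _ fh.
apply: K_proper => x; apply/(quot_pi_eq0 K_sub).
have [m <-] := f_surj (quot_pi K_sub x).
by rewrite -hf; apply/quot_pi_eq0/traceK/(hom_range_trace hh); exists m.
Qed.

Theorem proposition7p6 (A : nualg) (HA : AUF A) (M : lmodule A)
  (HMcoh : coherent M) (HMproj : projective_coh M) :
  projective_generator M <->
  (forall N : lmodule A, coherent N -> irreducible N ->
     exists f : M -> N, is_hom f /\ surj f).
Proof.
split=> [[_ [_ M_gen]] N N_coh N_irr | M_onto].
  have [n [_ [f [fh f_surj]]]] := M_gen N N_coh.
  have [i fi_surj] := dsum_surj_irreducible fh f_surj N_irr.
  by exists (f \o dsum_delta i); split => //; apply: hom_comp (dsum_delta_hom M i) fh.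
split=> //; split=> // N N_coh.
have [gens gen] := (fin_generatedP N).1 N_coh.2.
exact: trace_full_surj gen (trace_full_of_irreducible_images HMproj M_onto N_coh).
Qed.
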